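(* Let $d\ge 1$ and let $n$ be an odd positive integer. Let $v_1,\ldots,v_n\in\mathbb{R}^d$ be non-zero vectors with $\|v_i\|_2\le 1$ for all $i$, let $\varepsilon_1,\ldots,\varepsilon_n$ be independent Rademacher random variables, and set $S_n=v_1\varepsilon_1+\cdots+v_n\varepsilon_n$ and $R_{n-1}=\varepsilon_1+\cdots+\varepsilon_{n-1}$. Then $$\mathbb{P}(S_n=0)\le \mathbb{P}\left(\tfrac12 R_{n-1}+\varepsilon_n=0\right).$$
   Context: A Rademacher random variable $\varepsilon$ satisfies $\mathbb{P}(\varepsilon=1)=\mathbb{P}(\varepsilon=-1)=\tfrac12$. *)

From mathcomp Require Import all_boot all_order all_algebra.
From mathcomp Require Import reals.
Set Implicit Arguments. Unset Strict Implicit. Unset Printing Implicit Defensive.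
Import Order.TTheory GRing.Theory Num.Theory.
Local Open Scope ring_scope.

(* A realisation of n independent Rademacher variables: the sample space is
   the set of sign patterns {ffun 'I_n -> bool} with the uniform
   probability (the product of the fair coin laws); eps_i = rad (e i). *)
Definition rad (R : realType) (b : bool) : R := if b then 1 else -1.

Definition rad_prob (R : realType) (n : nat) (E : pred {ffun 'I_n -> bool}) : R :=
  #|[set e | E e]|%:R / 2%:R ^+ n.

Definition norm2 (R : realType) (d : nat) (v : 'rV[R]_d) : R :=
  Num.sqrt (\sum_(j < d) v ord0 j ^+ 2).

Definition Ssum (R : realType) (n d : nat) (v : 'I_n -> 'rV[R]_d)
  (e : {ffun 'I_n -> bool}) : 'rV[R]_d :=
  \sum_(i < n) rad R (e i) *: v i.

(* R_{n-1} = eps_1 + ... + eps_{n-1} (indices 0..n-2 in 0-based form) *)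
Definition Rpart (R : realType) (n : nat) (e : {ffun 'I_n -> bool}) : R :=
  \sum_(i < n | (i < n.-1)%N) rad R (e i).

(* eps_n (the last variable, 0-based index n-1) *)
Definition last_eps (R : realType) (n : nat) (e : {ffun 'I_n -> bool}) : R :=
  \sum_(i < n | val i == n.-1) rad R (e i).

From mathcomp Require Import all_boot all_order all_algebra all_fingroup.
From mathcomp Require Import reals zify lra.
(* Imported last, so that [rad] is the Rademacher sign of Defs, not sesquilinear.rad. *)
From Pilot Require Import Defs.
Set Implicit Arguments. Unset Strict Implicit. Unset Printing Implicit Defensive.
Import Order.TTheory GRing.Theory Num.Theory.

(* Evaluating each v_i against the moment vector (1, t, t^2, ...) for a t that is a
   root of none of the (nonzero) polynomials sum_j v_i(j) X^j reduces S_n = 0 to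
   sum_i eps_i a_i = 0 with nonzero reals a_i.  Up to flipping signs, the zero-sum
   sign patterns are the sets S with sum_(i in S) |a_i| = sum_(i notin S) |a_i|,
   which form an antichain closed under complementation.  For n = 2k+1, Katona's
   cycle method bounds such a family by 2k/(2k+1) C(2k+1, k): in a cyclic order at
   most one arc starting at each point can lie in the family, and complementation
   pairs these arcs without fixed points, so at most 2k arcs do; averaging over all
   cyclic orders, with an arc of length j weighted by C(n, j) <= C(n, k), gives the
   bound.  The right-hand event contains the 2 C(2k, k-1) = 2k/(2k+1) C(2k+1, k)
   sets of size k containing n and their complements. *)

Definition antichain (T : finType) (A : {set {set T}}) :=
  {in A &, forall S U : {set T}, S \subset U -> S = U}.

Definition complement_closed (T : finType) (A : {set {set T}}) :=
  {in A, forall S, ~: S \in A}.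

Lemma leq_bin_half n j : 'C(n, j) <= 'C(n, n./2).
Proof.
have n_split := odd_double_half n.
have bin_homo : {in [pred i | i <= n./2] &, {homo binomial n : i j / i <= j}}.
  apply: homo_leq_in => [//||a b|i]; first exact: leq_trans.
    rewrite !inE => _ le_b_half c /andP [_ /ltnW le_c_b]; exact: leq_trans le_b_half.
  rewrite !inE => _ lt_i_half.
  rewrite -(@leq_pmul2l i.+1) // mul_bin_left leq_mul2r; apply/orP; right; lia.
have [le_j_half | lt_half_j] := leqP j n./2; first by apply: bin_homo; rewrite ?inE.
have [le_j_n | lt_n_j] := leqP j n; last by rewrite bin_small.
by rewrite -bin_sub //; apply: bin_homo; rewrite ?inE //; lia.
Qed.

Lemma even_card_fixfree_involution (T : finType) (g : T -> T) (P : {set T}) :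
  involutive g -> (forall x, g x != x) -> {in P, forall x, g x \in P} -> ~~ odd #|P|.
Proof.
move=> gK g_neq; elim: {P}_.+1 {-2}P (ltnSn #|P|) => // c IH P le_P_c gP.
have [-> | [x xP]] := set_0Vmem P; first by rewrite cards0.
set Q := P :\: [set x; g x].
have pair_sub : [set x; g x] \subset P by rewrite subUset !sub1set xP gP.
have card_P : #|P| = #|Q|.+2.
  by rewrite -(cardsID [set x; g x] P) (setIidPr pair_sub) cards2 eq_sym g_neq add2n.
rewrite card_P /= negbK; apply: IH; first by rewrite card_P in le_P_c; lia.
move=> y; rewrite !inE => /andP [y_pair yP]; rewrite gP // andbT.
apply: contra y_pair => /orP [/eqP gy_x | /eqP /(inv_inj gK) ->]; last by rewrite eqxx.
by rewrite -gy_x gK eqxx orbT.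
Qed.

Lemma exists_perm_imset (T : finType) (S S' : {set T}) :
  #|S| = #|S'| -> exists s : {perm T}, s @: S = S'.
Proof.
move: {2}#|S :\: S'| (erefl #|S :\: S'|) => k; elim: k S => [|k IH] S diff_S card_S.
  exists 1%g; rewrite imset_perm1; apply/eqP.
  by rewrite eqEcard card_S leqnn andbT -setD_eq0 -cards_eq0 diff_S.
have card_diff : #|S' :\: S| = k.+1.
  by rewrite -diff_S !cardsD card_S setIC.
have [x] : exists x, x \in S :\: S' by apply/set0Pn; rewrite -card_gt0 diff_S.
have [y] : exists y, y \in S' :\: S by apply/set0Pn; rewrite -card_gt0 card_diff.
rewrite !inE => /andP [yNS yS'] /andP [xNS' xS].
have diff_swap : (tperm x y @: S) :\: S' = (S :\: S') :\ x.
  apply/setP => z; rewrite !inE -preim_permV inE tpermV.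
  have [-> | neq_zx] := eqVneq z x; first by rewrite tpermL (negbTE yNS) andbF.
  have [-> | neq_zy] := eqVneq z y; first by rewrite tpermR yS'.
  by rewrite tpermD // eq_sym.
have [t swap_t] : exists t : {perm T}, t @: (tperm x y @: S) = S'.
  apply: IH; last by rewrite card_imset ?card_S //; exact: perm_inj.
  apply/eqP; rewrite diff_swap -eqSS -diff_S (cardsD1 x (S :\: S')).
  by rewrite [x \in _]inE xNS' xS.
by exists (tperm x y * t)%g; rewrite -swap_t -imset_comp; apply: eq_imset => z; rewrite permM.
Qed.

Lemma card_sets_containing (T : finType) (x : T) k :
  #|T| * #|[set S : {set T} | (#|S| == k) && (x \in S)]| = k * 'C(#|T|, k).
Proof.
pose X y := [set S : {set T} | (#|S| == k) && (y \in S)].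
have card_X_le y z : #|X y| <= #|X z|.
  rewrite -(card_imset _ (imset_inj (@perm_inj _ (tperm y z)))).
  apply/subset_leq_card/subsetP => U /imsetP [S]; rewrite !inE => /andP [/eqP card_S yS] ->.
  rewrite card_imset ?card_S ?eqxx; last exact: perm_inj.
  by rewrite -preim_permV inE tpermV tpermR.
have card_X y : #|X y| = #|X x| by apply/eqP; rewrite eqn_leq !card_X_le.
have card_X_sum y : #|X y| = \sum_(S in [set S : {set T} | #|S| == k]) (y \in S).
  rewrite -sum1_card (eq_bigl (fun S => (S \in [set S : {set T} | #|S| == k]) && (y \in S))).
    by rewrite big_mkcondr; apply: eq_bigr => S _; case: (y \in S).
  by move=> S; rewrite !inE.
transitivity (\sum_y #|X y|).
  by rewrite (eq_bigr _ (fun y _ => card_X y)) sum_nat_const.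
rewrite (eq_bigr _ (fun y _ => card_X_sum y)) exchange_big /= (eq_bigr (fun=> k)) => [|S].
  by rewrite sum_nat_const card_draws mulnC.
rewrite inE => /eqP <-; rewrite -sum1_card [RHS]big_mkcond.
by apply: eq_bigr => y _; case: (y \in S).
Qed.

Definition initial n j : {set 'I_n} := [set i : 'I_n | i < j].
Arguments initial {n}.

Lemma card_initial n j : j <= n -> #|@initial n j| = j.
Proof.
move=> le_j_n; have widen_inj : injective (widen_ord le_j_n) by move=> a b [] /val_inj.
rewrite -[j in RHS]card_ord -(card_imset _ widen_inj); apply: eq_card => x.
rewrite inE; apply/idP/imsetP => [lt_x_j | [y _ ->]]; last exact: (ltn_ord y).
by exists (Ordinal lt_x_j) => //; apply: val_inj.
Qed.

(** * Katona's cycle method *)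

Section Cycles.
Variable n : nat.
Implicit Types (r x y : 'I_n.+1) (s : {perm 'I_n.+1}) (A : {set {set 'I_n.+1}}).

Definition rot r : {perm 'I_n.+1} := perm (addIr r).

Definition arc r j := rot r @: initial j.

Lemma mem_arc r j x : (x \in arc r j) = ((x - r)%R < j).
Proof.
rewrite {1}(_ : x = rot r (x - r)%R); last by rewrite permE subrK.
by rewrite mem_imset ?inE //; exact: perm_inj.
Qed.

Lemma card_arc r j : j <= n.+1 -> #|arc r j| = j.
Proof. by move=> le_j_n; rewrite card_imset ?card_initial //; exact: perm_inj. Qed.

Lemma arcS r j j' : j <= j' -> arc r j \subset arc r j'.
Proof. by move=> le_jj'; apply/subsetP => x; rewrite !mem_arc => /leq_trans; apply. Qed.

Lemma ltn_subZp y j : j <= n.+1 -> ((y - inZp j)%R < n.+1 - j) = (j <= y).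
Proof.
rewrite leq_eqVlt => /orP [/eqP -> | lt_j_n].
  have -> : inZp n.+1 = 0%R :> 'I_n.+1 by apply: val_inj; rewrite /= modnn.
  by rewrite subr0 subnn ltn0 leqNgt ltn_ord.
have -> : val (y - inZp j)%R = (y + (n.+1 - j)) %% n.+1.
  by rewrite /= modnDmr (modn_small lt_j_n).
have lt_y_n := ltn_ord y; have [le_j_y | lt_y_j] := leqP j y.
  by rewrite (addnBA _ (ltnW lt_j_n)) -(addnBAC _ le_j_y) modnDr modn_small; lia.
by rewrite modn_small; lia.
Qed.

Lemma setC_arc r (j : 'I_n.+2) : ~: arc r j = arc (r + inZp j)%R (rev_ord j).
Proof.
apply/setP => x; rewrite inE !mem_arc opprD addrA.
by rewrite [nat_of_ord (rev_ord j)]/= subSS ltn_subZp ?leq_ord // -ltnNge.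
Qed.

Definition arc_compl (p : 'I_n.+1 * 'I_n.+2) := ((p.1 + inZp p.2)%R, rev_ord p.2).

Lemma arc_complK : involutive arc_compl.
Proof.
move=> [r j]; rewrite /arc_compl /= rev_ordK -addrA.
have -> : (inZp j + inZp (rev_ord j) = 0 :> 'I_n.+1)%R.
  by apply: val_inj; rewrite /= modnDm subSS subnKC ?leq_ord ?modnn.
by rewrite addr0.
Qed.

Lemma arc_compl_neq p : odd n.+1 -> arc_compl p != p.
Proof.
move=> odd_n; case: p => r j; apply/negP => /eqP [_ /(congr1 val) /=].
rewrite subSS; have := leq_ord j; have := odd_double_half n.+1; rewrite odd_n; lia.
Qed.

Definition arcs_in (A : {set {set 'I_n.+1}}) :=
  [set p : 'I_n.+1 * 'I_n.+2 | arc p.1 p.2 \in A].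

Lemma card_arcs_in_le A : antichain A -> #|arcs_in A| <= n.+1.
Proof.
move=> antiA; have fst_inj : {in arcs_in A &, injective fst}.
  move=> [r j] [r' j']; rewrite !inE /= => jA j'A eq_rr'; subst r'.
  congr pair; apply: val_inj.
  have card_eq (j1 j2 : 'I_n.+2) :
      arc r j1 \in A -> arc r j2 \in A -> j1 <= j2 -> j1 = j2 :> nat.
    move=> j1A j2A /(arcS r) /(antiA _ _ j1A j2A) /(congr1 (fun S : {set _} => #|S|)).
    by rewrite !card_arc ?leq_ord.
  by have [/(card_eq _ _ jA j'A) | /ltnW /(card_eq _ _ j'A jA)] := leqP j j'.
by rewrite -(card_in_imset fst_inj) -[X in _ <= X]card_ord max_card.
Qed.

Lemma even_card_arcs_in A : odd n.+1 -> complement_closed A -> ~~ odd #|arcs_in A|.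
Proof.
move=> odd_n complA; apply: (even_card_fixfree_involution arc_complK) => [p|[r j]].
  exact: arc_compl_neq.
by rewrite !inE /= -setC_arc; exact: complA.
Qed.

Lemma sum_arc_weights_le A : odd n.+1 -> antichain A -> complement_closed A ->
  \sum_r \sum_(j < n.+2) (arc r j \in A) * 'C(n.+1, j) <= n * 'C(n.+1, n./2).
Proof.
move=> odd_n antiA complA.
have card_le_n : #|arcs_in A| <= n.
  have := card_arcs_in_le antiA; rewrite leq_eqVlt ltnS => /orP [/eqP card_n | //].
  by have := even_card_arcs_in odd_n complA; rewrite card_n odd_n.
have half_n : n.+1./2 = n./2 by rewrite /= uphalf_half; move: odd_n => /= /negbTE ->.
rewrite pair_big /= (bigID (mem (arcs_in A))) /= [X in _ + X]big1 => [|p]; last first.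
  by rewrite inE => /negbTE ->.
rewrite addn0 (@leq_trans (\sum_(p in arcs_in A) 'C(n.+1, n./2))) //.
  by apply: leq_sum => p; rewrite inE => ->; rewrite mul1n -half_n leq_bin_half.
by rewrite sum_nat_const leq_mul2r card_le_n orbT.
Qed.

Definition prefix s j := s @: @initial n.+1 j.

Lemma card_prefix s j : j <= n.+1 -> #|prefix s j| = j.
Proof. by move=> le_j_n; rewrite card_imset ?card_initial //; exact: perm_inj. Qed.

Lemma prefix_rot r s j : prefix (rot r * s) j = s @: arc r j.
Proof. by rewrite /prefix /arc -imset_comp; apply: eq_imset => x; rewrite permM. Qed.

Lemma prefix_count (S : {set 'I_n.+1}) :
  'C(n.+1, #|S|) * \sum_s (prefix s #|S| == S) = n.+1`!.
Proof.
set k := #|S|; have le_k_n : k <= n.+1 by rewrite -[X in _ <= X]card_ord max_card.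
have count_eq (S' : {set 'I_n.+1}) :
    #|S'| = k -> \sum_s (prefix s k == S') = \sum_s (prefix s k == S).
  move=> card_S'; have [t tS'] := exists_perm_imset (esym card_S').
  rewrite (reindex_inj (mulIg t)); apply: eq_bigr => s _ /=.
  have -> : prefix (s * t)%g k = t @: prefix s k.
    by rewrite /prefix -imset_comp; apply: eq_imset => x; rewrite permM.
  rewrite -tS'; congr (nat_of_bool _); apply/eqP/eqP => [|-> //].
  exact: (imset_inj (@perm_inj _ t)) (prefix s k) S.
have total : \sum_(S' in [set S' : {set 'I_n.+1} | #|S'| == k]) \sum_s (prefix s k == S')
             = n.+1`!.
  rewrite exchange_big /= -card_Sn -sum1_card; apply: eq_bigr => s _.
  rewrite (bigD1 (prefix s k)) /=; last by rewrite inE card_prefix.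
  by rewrite eqxx big1 // => S' /andP [_ /negbTE]; rewrite eq_sym => ->.
rewrite -total -[X in 'C(X, _)]card_ord -card_draws -sum_nat_const.
by apply: eq_bigr => S'; rewrite inE => /eqP /count_eq.
Qed.

Lemma sum_prefix_weights A :
  \sum_s \sum_(j < n.+2) (prefix s j \in A) * 'C(n.+1, j) = #|A| * n.+1`!.
Proof.
have mem_sum s (j : 'I_n.+2) :
    (prefix s j \in A) * 'C(n.+1, j) = \sum_(S in A) (prefix s j == S) * 'C(n.+1, #|S|).
  have [jA | jNA] := boolP (prefix s j \in A); last first.
    by rewrite big1 // => S SA; case: eqP => // eq_S; rewrite eq_S SA in jNA.
  rewrite (bigD1 (prefix s j)) //= eqxx card_prefix ?leq_ord // big1 ?addn0 // => S /andP [_].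
  by rewrite eq_sym => /negbTE ->.
have only_card S s : \sum_(j < n.+2) (prefix s j == S) * 'C(n.+1, #|S|)
                     = (prefix s #|S| == S) * 'C(n.+1, #|S|).
  have lt_S : #|S| < n.+2 by rewrite ltnS -[X in _ <= X]card_ord max_card.
  rewrite (bigD1 (Ordinal lt_S)) //= big1 ?addn0 // => j neq_j.
  case: eqP => // eq_S; case/eqP: neq_j; apply: val_inj.
  by rewrite /= -eq_S card_prefix ?leq_ord.
under eq_bigr do under eq_bigr do rewrite mem_sum.
under eq_bigr do rewrite exchange_big.
rewrite exchange_big -sum_nat_const; apply: eq_bigr => S _.
under eq_bigr do rewrite only_card.
by rewrite -big_distrl -(prefix_count S) mulnC.
Qed.

End Cycles.

Lemma complement_closed_antichain_card_le n (A : {set {set 'I_n.+1}}) :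
  odd n.+1 -> antichain A -> complement_closed A -> #|A| * n.+1 <= n * 'C(n.+1, n./2).
Proof.
move=> odd_n antiA complA.
pose w s := \sum_(j < n.+2) (prefix s j \in A) * 'C(n.+1, j).
have rot_bound s : \sum_r w (rot r * s)%g <= n * 'C(n.+1, n./2).
  pose As := [set X : {set 'I_n.+1} | s @: X \in A].
  rewrite (eq_bigr (fun r => \sum_(j < n.+2) (arc r j \in As) * 'C(n.+1, j))); last first.
    by move=> r _; apply: eq_bigr => j _; rewrite prefix_rot inE.
  apply: sum_arc_weights_le => // [X Y | X]; rewrite !inE.
    by move=> XA YA /(imsetS s) /(antiA _ _ XA YA) /(imset_inj (@perm_inj _ s)).
  by rewrite -!preim_permV preimsetC; exact: complA.
have rot_sum r : \sum_s w (rot r * s)%g = #|A| * n.+1`!.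
  by rewrite -sum_prefix_weights [RHS](reindex_inj (mulgI (rot r))).
have : \sum_s \sum_r w (rot r * s)%g <= \sum_(s : {perm 'I_n.+1}) n * 'C(n.+1, n./2).
  by apply: leq_sum => s _; exact: rot_bound.
rewrite exchange_big /= (eq_bigr _ (fun r _ => rot_sum r)) !sum_nat_const card_ord card_Sn.
by rewrite mulnA [_ * (n.+1)`!]mulnC leq_pmul2l ?fact_gt0 // mulnC.
Qed.

Local Open Scope ring_scope.

(** * Zero sums of signed weights *)

Section ZeroSumSets.
Variables (R : realDomainType) (n : nat) (b : 'I_n -> R).

Definition signed_sum (S : {set 'I_n}) := \sum_i (if i \in S then b i else - b i).

Definition zero_sum_sets := [set S | signed_sum S == 0].

Lemma signed_sumC S : signed_sum (~: S) = - signed_sum S.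
Proof.
by rewrite /signed_sum -sumrN; apply: eq_bigr => i _; rewrite inE; case: (i \in S); rewrite ?opprK.
Qed.

Lemma zero_sum_sets_complement_closed : complement_closed zero_sum_sets.
Proof. by move=> S; rewrite !inE signed_sumC oppr_eq0. Qed.

Hypothesis b_gt0 : forall i, 0 < b i.

Lemma zero_sum_sets_antichain : antichain zero_sum_sets.
Proof.
move=> S U; rewrite !inE => /eqP sumS /eqP sumU subSU.
pose d i := (if i \in U then b i else - b i) - (if i \in S then b i else - b i).
have d_ge0 i : 0 <= d i.
  rewrite /d; have [iS | iNS] := boolP (i \in S); first by rewrite (subsetP subSU i iS) subrr.
  by case: (i \in U); rewrite ?subrr // opprK addr_ge0 // ltW.
have /psumr_eq0P d0 : \sum_i d i = 0.
  by rewrite sumrB; move: sumU sumS; rewrite /signed_sum => -> ->; rewrite subrr.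
apply/eqP; rewrite eqEsubset subSU; apply/subsetP => i iU; apply: contraT => iNS.
have := d0 (fun j _ => d_ge0 j) i isT; rewrite /d iU (negbTE iNS) opprK => /eqP.
by rewrite paddr_eq0 ?ltW // => /andP [/eqP bi0 _]; have := b_gt0 i; rewrite bi0 ltxx.
Qed.

End ZeroSumSets.

Lemma rad_mulr (R : realType) (b : bool) (x : R) : x != 0 ->
  rad R b * x = if b == (0 < x) then `|x| else - `|x|.
Proof.
move=> x_neq0; have [x_gt0 | x_lt0 | x0] := ltrgt0P x.
- by case: b; rewrite /rad ?mul1r ?mulN1r.
- by case: b; rewrite /rad ?mul1r ?mulN1r opprK.
- by rewrite x0 eqxx in x_neq0.
Qed.

Lemma card_rad_sum_eq0_le (R : realType) n (a : 'I_n -> R) : (forall i, a i != 0) ->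
  (#|[set e : {ffun 'I_n -> bool} | (\sum_i rad R (e i) * a i == 0)%R]|
     <= #|zero_sum_sets (fun i => `|a i|%R)|)%N.
Proof.
move=> a_neq0; pose sign_set (e : {ffun 'I_n -> bool}) := [set i | e i == (0 < a i)].
have sign_set_inj : injective sign_set.
  move=> e e' eq_e; apply/ffunP => i; have := congr1 (fun S : {set _} => i \in S) eq_e.
  by rewrite !inE; case: (e i); case: (e' i); case: (0 < a i).
rewrite -(card_imset _ sign_set_inj); apply/subset_leq_card/subsetP => S /imsetP [e].
rewrite !inE => /eqP sum0 ->; rewrite -[X in _ == X]sum0; apply/eqP/eq_bigr => i _.
by rewrite inE rad_mulr.
Qed.

Lemma sum_rad_mem (R : realType) n (S : {set 'I_n}) :
  \sum_i rad R (i \in S) = #|S|%:R - #|~: S|%:R.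
Proof.
rewrite (bigID (mem S)) /= -!sumr_const.
rewrite -sumrN; congr (_ + _); first by apply: eq_bigr => i ->.
by apply: eq_big => [i | i /negbTE ->]; rewrite ?inE.
Qed.

Lemma Rpart_add_last_eps (R : realType) n (e : {ffun 'I_n.+1 -> bool}) :
  Rpart R e + last_eps R e = \sum_i rad R (e i).
Proof.
rewrite [RHS](bigID (fun i : 'I_n.+1 => (i < n)%N)) /=; congr (_ + _).
by apply: eq_bigl => i; rewrite /= -leqNgt eqn_leq -ltnS ltn_ord.
Qed.

Lemma last_eps_mem (R : realType) n (S : {set 'I_n.+1}) :
  last_eps R [ffun i => i \in S] = rad R (ord_max \in S).
Proof. by rewrite /last_eps (big_pred1 ord_max) ?ffunE // => i; rewrite /= -val_eqE. Qed.

Lemma half_Rpart_add_last_eps_mem (R : realType) n (S : {set 'I_n.+1}) :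
  #|~: S|%:R - #|S|%:R = rad R (ord_max \in S) ->
  2^-1 * Rpart R [ffun i => i \in S] + last_eps R [ffun i => i \in S] = 0.
Proof.
move=> card_diff; have := Rpart_add_last_eps R [ffun i => i \in S].
by under eq_bigr do rewrite ffunE; rewrite last_eps_mem sum_rad_mem -card_diff; lra.
Qed.

Lemma card_half_Rpart_add_last_eps_eq0_ge (R : realType) n : odd n.+1 ->
  (n * 'C(n.+1, n./2) <=
   #|[set e : {ffun 'I_n.+1 -> bool} | (2^-1 * Rpart R e + last_eps R e == 0)%R]| * n.+1)%N.
Proof.
move=> odd_n; set k := n./2; set E := [set e | _].
have n_eq : n = k.*2 by have := odd_double_half n; move: odd_n => /= /negbTE ->.
pose emb (S : {set 'I_n.+1}) := [ffun i => i \in S].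
have emb_inj : injective emb.
  by move=> S S' /ffunP eq_SS'; apply/setP => i; have := eq_SS' i; rewrite !ffunE.
have embE S : #|~: S|%:R - #|S|%:R = rad R (ord_max \in S) -> emb S \in E.
  by move=> card_diff; rewrite inE half_Rpart_add_last_eps_mem.
pose X := [set S : {set 'I_n.+1} | (#|S| == k) && (ord_max \in S)].
have X_disj : [disjoint X & [set ~: S | S in X]].
  rewrite -setI_eq0; apply/eqP/setP => S; rewrite !inE.
  apply/negP => /andP [/andP [_ maxS] /imsetP [S' S'X eq_S]].
  by move: S'X maxS; rewrite eq_S !inE => /andP [_ ->].
have sub_E : emb @: (X :|: [set ~: S | S in X]) \subset E.
  have card_X_setC S : S \in X -> [/\ #|S| = k, #|~: S| = k.+1 & ord_max \in S].
    rewrite inE => /andP [/eqP card_S maxS]; split=> //.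
    by have := cardsC S; rewrite card_ord card_S; lia.
  apply/subsetP => e /imsetP [S]; rewrite inE => /orP [SX | /imsetP [S' S'X ->]] ->.
    have [card_S card_SC maxS] := card_X_setC S SX; apply: embE.
    by rewrite card_S card_SC maxS /rad -addn1 natrD; lra.
  have [card_S' card_S'C maxS'] := card_X_setC S' S'X; apply: embE.
  by rewrite setCK card_S' card_S'C inE maxS' /rad /= -addn1 natrD; lra.
have card_X := card_sets_containing (ord_max : 'I_n.+1) k; rewrite card_ord in card_X.
have := subset_leq_card sub_E.
have /eqP card_U : (#|X :|: [set ~: S | S in X]| == #|X| + #|[set ~: S | S in X]|)%N.
  by rewrite (leq_card_setU _ _).2.
rewrite (card_imset _ emb_inj) card_U (card_imset _ (@setC_inj _)).
move=> le_E; apply: leq_trans (leq_mul le_E (leqnn n.+1)).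
by rewrite addnn -mul2n -mulnA [(#|X| * _)%N]mulnC card_X mulnA mul2n -n_eq.
Qed.

(** * Projection to the line *)

Definition moment (R : pzRingType) d (t : R) (x : 'rV[R]_d) := \sum_(j < d) x ord0 j * t ^+ j.

Lemma moment_sum (R : pzRingType) d n (t : R) (c : 'I_n -> R) (v : 'I_n -> 'rV[R]_d) :
  moment t (\sum_i c i *: v i) = \sum_i c i * moment t (v i).
Proof.
rewrite /moment; under eq_bigr do rewrite summxE mulr_suml.
rewrite exchange_big; apply: eq_bigr => i _; rewrite mulr_sumr.
by apply: eq_bigr => j _; rewrite mxE mulrA.
Qed.

Lemma exists_moment_neq0 (R : numDomainType) d n (v : 'I_n -> 'rV[R]_d.+1) :
  (forall i, v i != 0) -> exists t : R, forall i, moment t (v i) != 0.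
Proof.
move=> v_neq0; pose p i := \poly_(j < d.+1) v i ord0 (inord j).
have p_neq0 i : p i != 0.
  apply: contra (v_neq0 i) => /eqP p0; apply/eqP/rowP => j; rewrite mxE.
  by have := congr1 (fun q : {poly R} => q`_j) p0; rewrite coef_poly ltn_ord inord_val coef0.
pose P := \prod_i p i; have P_neq0 : P != 0 by apply/prodf_neq0 => i _.
have /hasP [t _ Pt] : has (predC (root P)) [seq (i%:R : R) | i <- iota 0 (size P)].
  rewrite has_predC; apply/negP => all_root.
  have /(max_poly_roots P_neq0 all_root) : uniq [seq (i%:R : R) | i <- iota 0 (size P)].
    by rewrite map_inj_uniq ?iota_uniq // => a b /eqP; rewrite eqr_nat => /eqP.
  by rewrite size_map size_iota ltnn.
exists t => i; move: Pt; rewrite inE /root horner_prod => /prodf_neq0 /(_ i isT).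
by rewrite horner_poly /moment; under eq_bigr do rewrite inord_val.
Qed.

Theorem theorem4 (R : realType) (d n : nat) (hd : (1 <= d)%N) (hn : odd n)
  (v : 'I_n -> 'rV[R]_d)
  (hv0 : forall i, v i != 0) (hv1 : forall i, norm2 (v i) <= 1) :
  rad_prob R (fun e => Ssum v e == 0)
  <= rad_prob R (fun e : {ffun 'I_n -> bool} => 2^-1 * Rpart R e + last_eps R e == 0).
Proof.
case: d hd v hv0 hv1 => [//|d] _ v hv0 _; case: n hn v hv0 => [//|n] odd_n v hv0.
rewrite /rad_prob ler_wpM2r ?invr_ge0 ?exprn_ge0 // ler_nat -(leq_pmul2r (ltn0Sn n)).
apply: leq_trans _ (card_half_Rpart_add_last_eps_eq0_ge R odd_n).
have [t t_neq0] := exists_moment_neq0 hv0.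
have abs_gt0 i : 0 < `|moment t (v i)| by rewrite normr_gt0.
apply: leq_trans _ (complement_closed_antichain_card_le odd_n
  (zero_sum_sets_antichain abs_gt0) (@zero_sum_sets_complement_closed _ _ _)).
rewrite leq_pmul2r //; apply: leq_trans _ (card_rad_sum_eq0_le t_neq0).
apply/subset_leq_card/subsetP => e; rewrite !inE => /eqP S0.
by rewrite -moment_sum -/(Ssum v e) S0 /moment big1 // => j _; rewrite mxE mul0r.
Qed.
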